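(* Let $\mathcal{F}$ be a fundamental polygon for a discrete subgroup $\Gamma\leq\mathrm{PSL}_2(\mathbb{R})$ of finite covolume, and let $I,J$ be disjoint, non-empty, open, connected subsegments of $\partial\mathcal{F}$ such that no endpoint of $I$ lies on the same edge of $\mathcal{F}$ as an endpoint of $J$. Then $d_{I,J}>0$.
   Context: A fundamental polygon is an open convex $\mathcal{F}\subset\mathbb{H}$ whose closure is a convex hyperbolic polygon with finitely many geodesic sides, every point of $\mathbb{H}$ $\Gamma$-equivalent to a point of $\overline{\mathcal{F}}$, distinct $\Gamma$-equivalent points of $\overline{\mathcal{F}}$ lying on $\partial\mathcal{F}$; its edges are the maximal geodesic segments of $\partial\mathcal{F}$. Orient $\partial\mathcal{F}$ positively (with $\mathcal{F}$ on the left). Let $z_0\in\overline I$, $z_1\in\overline J$ be the endpoints such that the open arc of $\partial\mathcal{F}$ running positively from $z_1$ to $z_0$ is disjoint from $I\cup J$. Let $S$ be the complete geodesic through $z_0,z_1$ oriented from $z_0$ to $z_1$, with backward endpoint $x_0$ and forward endpoint $x_1$; take $\sigma\in\mathrm{PSL}_2(\mathbb{R})$ with $\sigma S=i\mathbb{R}$, $\sigma x_0=\infty$, $\sigma x_1=0$, and $\tilde B=\sigma^{-1}\{\Re z\geq0\}$. Then $\mathcal{P}_{I,J}=\tilde B\cap\mathcal{F}$ and $d_{I,J}$ is its hyperbolic area (measure $dx\,dy/y^2$). *)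

(* R : realType; the hyperbolic plane is
   modelled as H = {(x,y) : R * R | 0 < y} (upper half-plane, z = x + i y). *)
From mathcomp Require Import all_boot all_order all_algebra.
From mathcomp Require Import all_classical all_reals all_analysis.
Import Order.TTheory GRing.Theory Num.Theory.
Import numFieldNormedType.Exports.
Local Open Scope classical_set_scope.
Local Open Scope ring_scope.

Set Implicit Arguments.
Unset Strict Implicit.
Unset Printing Implicit Defensive.

Record mat2 (R : Type) := M2 { ma : R; mb : R; mc : R; md : R }.

Section Hyperbolic.
Variable R : realType.

Definition cadd (z w : R * R) : R * R := (z.1 + w.1, z.2 + w.2).
Definition csub (z w : R * R) : R * R := (z.1 - w.1, z.2 - w.2).
Definition cmul (z w : R * R) : R * R :=
  (z.1 * w.1 - z.2 * w.2, z.1 * w.2 + z.2 * w.1).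
Definition cscale (k : R) (z : R * R) : R * R := (k * z.1, k * z.2).
Definition cconj (z : R * R) : R * R := (z.1, - z.2).
Definition cnorm2 (z : R * R) : R := z.1 ^+ 2 + z.2 ^+ 2.
Definition cabs (z : R * R) : R := Num.sqrt (cnorm2 z).
Definition cinv (z : R * R) : R * R := (z.1 / cnorm2 z, - z.2 / cnorm2 z).
Definition cdiv (z w : R * R) : R * R := cmul z (cinv w).

Definition inH (z : R * R) : Prop := 0 < z.2.
Definition Hset : set (R * R) := [set z | inH z].

Definition det (g : mat2 R) : R := ma g * md g - mb g * mc g.
Definition mat_mul (g h : mat2 R) : mat2 R :=
  M2 (ma g * ma h + mb g * mc h) (ma g * mb h + mb g * md h)
     (mc g * ma h + md g * mc h) (mc g * mb h + md g * md h).
(* inverse of a determinant-one matrix *)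
Definition mat_inv (g : mat2 R) : mat2 R := M2 (md g) (- mb g) (- mc g) (ma g).
Definition mat_id : mat2 R := M2 1 0 0 1.
Definition mat_negid : mat2 R := M2 (-1) 0 0 (-1).
Definition mat_dist (g h : mat2 R) : R :=
  Num.max (Num.max `|ma g - ma h| `|mb g - mb h|)
          (Num.max `|mc g - mc h| `|md g - md h|).

(* A discrete subgroup of PSL_2(R), represented by its full preimage in
   SL_2(R) (a subgroup of SL_2(R) containing -I), discrete in the topology of
   SL_2(R) viewed as a subspace of R^4. *)
Definition discrete_subgroup (Gamma : set (mat2 R)) : Prop :=
  [/\ (forall g, Gamma g -> det g = 1),
      Gamma mat_id /\ Gamma mat_negid,
      (forall g h, Gamma g -> Gamma h -> Gamma (mat_mul g h)),
      (forall g, Gamma g -> Gamma (mat_inv g)) &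
      (forall g, Gamma g -> (exists e : R, 0 < e /\
         forall h, Gamma h -> mat_dist g h < e -> h = g))].

Definition mob (g : mat2 R) (z : R * R) : R * R :=
  cdiv (cadd (cscale (ma g) z) (mb g, 0)) (cadd (cscale (mc g) z) (md g, 0)).

(* extended points: the Riemann sphere C u {oo}; None = oo *)
Definition ext := option (R * R).
Definition ideal (e : ext) : Prop :=
  match e with None => True | Some z => z.2 = 0 end.
Definition mob_ext (g : mat2 R) (e : ext) : ext :=
  match e with
  | None => if mc g == 0 then None else Some (ma g / mc g, 0)
  | Some z => if cadd (cscale (mc g) z) (md g, 0) == (0, 0) then None
              else Some (mob g z)
  end.

Definition closureH (A : set (R * R)) : set (R * R) := closure A `&` Hset.
Definition bdry (F : set (R * R)) : set (R * R) := closureH F `\` F.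
(* closure in the Riemann sphere C u {oo} *)
Definition closure_ext (A : set (R * R)) (e : ext) : Prop :=
  match e with
  | Some z => closure A z
  | None => forall M : R, exists z, A z /\ M < `|z.1| + `|z.2|
  end.
Definition endpoint (A : set (R * R)) (e : ext) : Prop :=
  closure_ext A e /\ ~ (exists z, e = Some z /\ A z).
Definition rel_open (S A : set (R * R)) : Prop :=
  exists U : set (R * R), open U /\ A = U `&` S.

(* complete geodesics of H: zero sets in H of a(x^2+y^2) + b x + c with
   b^2 > 4ac (vertical lines and semicircles orthogonal to R) *)
Definition geod_eq (a b c : R) (z : R * R) : R :=
  a * (z.1 ^+ 2 + z.2 ^+ 2) + b * z.1 + c.
Definition is_geodesic (G : set (R * R)) : Prop :=
  exists a b c : R, 4 * a * c < b ^+ 2 /\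
    G = [set z | inH z /\ geod_eq a b c z = 0].
Definition closed_halfplane (h : R * R * R) : set (R * R) :=
  [set z | inH z /\ geod_eq h.1.1 h.1.2 h.2 z <= 0].
Definition geodesic_coeffs (h : R * R * R) : Prop :=
  4 * h.1.1 * h.2 < h.1.2 ^+ 2.

Definition hdist (z w : R * R) : R :=
  ln ((cabs (csub z (cconj w)) + cabs (csub z w)) /
      (cabs (csub z (cconj w)) - cabs (csub z w))).
Definition hseg (z w : R * R) : set (R * R) :=
  [set u | inH u /\ hdist z u + hdist u w = hdist z w].
Definition hconvex (A : set (R * R)) : Prop :=
  forall z w, A z -> A w -> hseg z w `<=` A.

Definition geod_segment (E : set (R * R)) : Prop :=
  [/\ exists G, is_geodesic G /\ E `<=` G,
      connected E &
      exists z w, [/\ E z, E w & z <> w]].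
Definition edge (F E : set (R * R)) : Prop :=
  [/\ geod_segment E, E `<=` bdry F &
      forall E', geod_segment E' -> E' `<=` bdry F -> E `<=` E' -> E' = E].

Definition fundamental_polygon (Gamma : set (mat2 R)) (F : set (R * R)) : Prop :=
  [/\ F `<=` Hset /\ open F, hconvex F,
      (exists hs : seq (R * R * R),
          (forall h, h \in hs -> geodesic_coeffs h) /\
          closureH F = [set z | inH z /\ forall h, h \in hs -> closed_halfplane h z]),
      (forall z, inH z -> (exists2 g, Gamma g & closureH F (mob g z))) &
      (forall z w, closureH F z -> closureH F w -> z <> w ->
         (exists2 g, Gamma g & mob g z = w) -> bdry F z /\ bdry F w)].

Definition boundary_subsegment (F I : set (R * R)) : Prop :=
  [/\ I `<=` bdry F, rel_open (bdry F) I, connected I & I !=set0].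

Definition mu2 := ((@lebesgue_measure R) \x (@lebesgue_measure R))%E.
Definition harea (A : set (R * R)) : \bar R :=
  (\int[mu2]_(z in A) ((z.2 ^-2)%:E))%E.

(* Cayley map to the unit disc centred at p in H (orientation preserving) *)
Definition cayley (p : R * R) (e : ext) : R * R :=
  match e with
  | None => (1, 0)
  | Some z => cdiv (csub z p) (csub z (cconj p))
  end.
Definition rot (t : R) (v : R * R) : R * R :=
  (cos t * v.1 - sin t * v.2, sin t * v.1 + cos t * v.2).
Definition same_dir (u v : R * R) : Prop :=
  exists k : R, 0 < k /\ u = cscale k v.
Definition ccw_open (u w v : R * R) : Prop :=
  exists s T : R, [/\ 0 < s, s < T, T <= 2 * pi,
                      same_dir w (rot s u) & same_dir v (rot T u)].
(* open arc of bdry F running positively (F on the left, i.e. counterclockwise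
   as seen from the interior point p) from e1 to e0 *)
Definition pos_arc (F : set (R * R)) (p : R * R) (e1 e0 : ext) : set (R * R) :=
  [set w | bdry F w /\ ccw_open (cayley p e1) (cayley p (Some w)) (cayley p e0)].

Definition on_pos_imag_axis (e : ext) : Prop :=
  match e with None => True | Some z => z.1 = 0 /\ 0 <= z.2 end.
Definition strictly_above (e f : ext) : Prop :=
  match e, f with
  | None, Some _ => True
  | Some z, Some w => w.2 < z.2
  | _, _ => False
  end.
(* S = complete geodesic through z0, z1, oriented from z0 to z1, has backward
   endpoint x0 and forward endpoint x1: some sigma in PSL_2(R) sends x0 to oo,
   x1 to 0 (hence S onto iR), and z0, z1 onto the closed positive imaginary
   axis with z0 strictly above z1. *)
Definition geod_ends (z0 z1 x0 x1 : ext) : Prop :=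
  [/\ ideal x0, ideal x1 &
      exists sigma, [/\ det sigma = 1,
        mob_ext sigma x0 = None /\ mob_ext sigma x1 = Some (0, 0),
        on_pos_imag_axis (mob_ext sigma z0), on_pos_imag_axis (mob_ext sigma z1)
        & strictly_above (mob_ext sigma z0) (mob_ext sigma z1)]].
Definition Btilde (x0 x1 : ext) : set (R * R) :=
  [set z | inH z /\ exists sigma, [/\ det sigma = 1, mob_ext sigma x0 = None,
        mob_ext sigma x1 = Some (0, 0) & 0 <= (mob sigma z).1]].

End Hyperbolic.

From Pilot Require Import Defs.
From mathcomp Require Import all_boot all_order all_algebra.
From mathcomp Require Import all_classical all_reals all_analysis.
From mathcomp Require Import ring lra.
Import Order.TTheory GRing.Theory Num.Theory.
Import numFieldNormedType.Exports.
Local Open Scope classical_set_scope.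
Local Open Scope ring_scope.

Set Implicit Arguments.
Unset Strict Implicit.
Unset Printing Implicit Defensive.

(* Let sigma = (a b; c d) be the matrix of [geod_ends]: the real part of
   sigma z has the sign of the quadratic [axis_eq z], whose zero set is the
   geodesic S.  If F meets the open set {axis_eq > 0}, then B~ /\ F contains
   a box and has positive area.  Otherwise F, being open, lies in
   {axis_eq < 0} (the equation of a geodesic has no critical point on it), so
   S supports the polygon: E = S /\ closure F lies in the boundary and is a
   connected geodesic segment, parametrised by t |-> sigma^-1 (i t) over an
   interval.  As two points determine a geodesic, E is a maximal boundary
   segment, i.e. an edge.  The half-plane inequalities cutting out closure F,
   pulled back along this parametrisation, are quadratic in t and hold at the
   images of z1 and z0, hence on the whole window between them; so z0 and z1
   both lie in the closure of the edge E, contradicting the hypothesis on I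
   and J. *)

Section GeodesicEquation.
Variable R : realType.
Implicit Types (A B C l : R) (z u w : R * R).

Lemma continuous_geod_eq A B C : continuous (geod_eq A B C).
Proof.
move=> z; apply: cvgD; last exact: cvg_cst.
apply: cvgD; apply: cvgMr; last exact: cvg_fst.
by apply: cvgD; apply: cvgM; (exact: cvg_fst || exact: cvg_snd).
Qed.

Lemma geod_eqZ l A B C z : geod_eq (l * A) (l * B) (l * C) z = l * geod_eq A B C z.
Proof. by rewrite /geod_eq; ring. Qed.

Lemma sqr_add_eq0 (x y : R) : x ^+ 2 + y ^+ 2 = 0 -> x = 0 /\ y = 0.
Proof.
by move=> /eqP; rewrite paddr_eq0 ?sqr_ge0 // !sqrf_eq0 => /andP[/eqP -> /eqP ->].
Qed.

Lemma colinear_of_cross0 (k1 k2 k3 n1 n2 n3 : R) :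
  [|| n1 != 0, n2 != 0 | n3 != 0] ->
  k1 * n2 = k2 * n1 -> k3 * n1 = k1 * n3 -> k2 * n3 = k3 * n2 ->
  exists l, [/\ k1 = l * n1, k2 = l * n2 & k3 = l * n3].
Proof.
have [->|n1_0 _ e12 e31 _] := eqVneq n1 0; last first.
  exists (k1 / n1); split; first by rewrite divfK.
    by apply: (mulIf n1_0); rewrite -e12; field.
  by apply: (mulIf n1_0); rewrite e31; field.
have [->|n2_0 _ e12 _ e23] := eqVneq n2 0; last first.
  exists (k2 / n2); split; last by apply: (mulIf n2_0); rewrite -e23; field.
    by apply: (mulIf n2_0); rewrite e12; field.
  by rewrite divfK.
rewrite /= !mulr0 => n3_0 _ /esym/eqP; rewrite mulf_eq0 (negPf n3_0) orbF.
move=> /eqP -> /eqP; rewrite mulf_eq0 (negPf n3_0) orbF => /eqP ->.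
by exists (k3 / n3); rewrite !mulr0 divfK.
Qed.

(* The coefficient vectors vanishing at [u] and [w] are all proportional to
   the cross product of (|u|^2, u.1, 1) and (|w|^2, w.1, 1). *)
Lemma geod_eq_two_points p1 p2 p3 q1 q2 q3 u w z :
  4 * q1 * q3 < q2 ^+ 2 -> u <> w -> inH u -> inH w ->
  geod_eq p1 p2 p3 u = 0 -> geod_eq p1 p2 p3 w = 0 ->
  geod_eq q1 q2 q3 u = 0 -> geod_eq q1 q2 q3 w = 0 ->
  geod_eq q1 q2 q3 z = 0 -> geod_eq p1 p2 p3 z = 0.
Proof.
move=> disc uw u_pos w_pos pu pw qu qw qz.
set n1 := u.1 - w.1; set n2 := cnorm2 w - cnorm2 u.
set n3 := cnorm2 u * w.1 - u.1 * cnorm2 w.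
have n_neq0 : [|| n1 != 0, n2 != 0 | n3 != 0].
  have [n1_0|//] := eqVneq n1 0; have [n2_0|//] := eqVneq n2 0.
  exfalso; apply: uw.
  have u1w1 : u.1 = w.1 by apply/eqP; rewrite -subr_eq0 -/n1 n1_0.
  have : u.2 ^+ 2 = w.2 ^+ 2 by move: n2_0; rewrite /n2 /cnorm2 u1w1; lra.
  move/eqP; rewrite eqrXn2 ?ltW // => /eqP u2w2.
  by rewrite [u]surjective_pairing [w]surjective_pairing u1w1 u2w2.
have pencil k1 k2 k3 : geod_eq k1 k2 k3 u = 0 -> geod_eq k1 k2 k3 w = 0 ->
    exists l, [/\ k1 = l * n1, k2 = l * n2 & k3 = l * n3].
  move=> ku kw; apply: colinear_of_cross0 n_neq0 _ _ _; apply/eqP; rewrite -subr_eq0.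
  - have -> : k1 * n2 - k2 * n1 = geod_eq k1 k2 k3 w - geod_eq k1 k2 k3 u.
      by rewrite /geod_eq /n1 /n2 /cnorm2; ring.
    by rewrite ku kw subrr.
  - have -> : k3 * n1 - k1 * n3 =
        u.1 * geod_eq k1 k2 k3 w - w.1 * geod_eq k1 k2 k3 u.
      by rewrite /geod_eq /n1 /n3 /cnorm2; ring.
    by rewrite ku kw !mulr0 subrr.
  - have -> : k2 * n3 - k3 * n2 =
        cnorm2 u * geod_eq k1 k2 k3 w - cnorm2 w * geod_eq k1 k2 k3 u.
      by rewrite /geod_eq /n2 /n3 /cnorm2; ring.
    by rewrite ku kw !mulr0 subrr.
have [lq [eq1 eq2 eq3]] := pencil _ _ _ qu qw.
have [lp [-> -> ->]] := pencil _ _ _ pu pw.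
move: qz; rewrite eq1 eq2 eq3 !geod_eqZ => /eqP; rewrite mulf_eq0.
case/orP=> [/eqP lq0|/eqP ->]; last by rewrite mulr0.
by move: disc; rewrite eq1 eq2 eq3 lq0 !mul0r mulr0 expr0n /= ltxx.
Qed.

Lemma closure_geod_eq_le0 A B C (S : set (R * R)) z :
  (forall u, S u -> geod_eq A B C u <= 0) -> closure S z -> geod_eq A B C z <= 0.
Proof.
move=> S_le0 Sz.
have : closed (geod_eq A B C @^-1` [set x : R | x <= 0]).
  by apply: (continuous_closedP _).1; [exact: continuous_geod_eq | exact: closed_le].
by apply; apply: closureS Sz; exact: S_le0.
Qed.

Lemma unbounded_geod_eq_lead_le0 A B C (S : set (R * R)) :
  (forall M : R, exists u, S u /\ M < `|u.1| + `|u.2|) ->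
  (forall u, S u -> geod_eq A B C u <= 0) -> A <= 0.
Proof.
move=> S_unbounded S_le0; rewrite leNgt; apply/negP => A_pos.
pose K : R := `|B| + `|C| + 1.
have [u [Su]] := S_unbounded (2 * K / A + 1).
pose r : R := `|u.1| + `|u.2|; rewrite -/r => r_big.
have K_pos : 0 < K by rewrite /K; have := normr_ge0 B; have := normr_ge0 C; lra.
have K2A : 0 <= 2 * K / A by rewrite divr_ge0 ?ltW //; lra.
have rK : 2 * K <= A * r.
  rewrite -(divfK (lt0r_neq0 A_pos) (2 * K)) mulrC; apply: ler_wpM2l; lra.
have r_sq : A * r ^+ 2 <= 2 * (A * cnorm2 u).
  have : r ^+ 2 <= 2 * cnorm2 u.
    rewrite /r /cnorm2 -(real_normK (num_real u.1)) -(real_normK (num_real u.2)).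
    by have := sqr_ge0 (`|u.1| - `|u.2|); lra.
  by move/(ler_wpM2l (ltW A_pos)); lra.
have Bu : - (`|B| * r) <= B * u.1.
  by apply: lerNnormlW; rewrite normrM ler_wpM2l // /r lerDl.
have Cu : - `|C| <= C by apply: lerNnormlW.
have rK2 : 2 * K * r <= A * r ^+ 2 by rewrite expr2 mulrA ler_wpM2r //; lra.
have := S_le0 u Su; rewrite /geod_eq -/(cnorm2 u).
have : `|C| <= `|C| * r by rewrite ler_peMr //; lra.
rewrite /K in rK2; lra.
Qed.

(* Pushing [z] along the gradient [g] of the equation gives
   [geod_eq (z + t g) = t |g|^2 (1 + A t)]. *)
Lemma geod_eq_gt0_near A B C z (U : set (R * R)) :
  4 * A * C < B ^+ 2 -> inH z -> geod_eq A B C z = 0 -> nbhs z U ->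
  exists2 w, U w & 0 < geod_eq A B C w.
Proof.
move=> disc z_pos Gz Uz.
pose g := (2 * A * z.1 + B, 2 * A * z.2).
have g_pos : 0 < cnorm2 g.
  rewrite lt_def addr_ge0 ?sqr_ge0 // andbT; apply/eqP => /sqr_add_eq0[g1 g2].
  have A0 : A = 0.
    by move/eqP: g2; rewrite !mulf_eq0 (gt_eqF z_pos) pnatr_eq0 orbF => /eqP.
  by move: g1 disc; rewrite /g /= A0 !(mulr0, mul0r, add0r) => ->; rewrite expr0n /= ltxx.
pose f t := (z.1 + t * g.1, z.2 + t * g.2).
have f_eq t : geod_eq A B C (f t) = t * cnorm2 g * (1 + A * t).
  by rewrite -[RHS]add0r -Gz /geod_eq /f /g /cnorm2 /=; ring.
have f_cvg : f t @[t --> 0^'+] --> z.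
  have -> : z = f 0 by rewrite /f !mul0r !addr0 -surjective_pairing.
  rewrite /f; apply: cvg_within_filter.
  apply: (@cvg_pair _ _ _ _ (nbhs _) (nbhs _)); apply: cvgD;
    (exact: cvg_cst || (apply: cvgMl; exact: cvg_id)).
have [t [Uft t_pos At]] : exists t, [/\ U (f t), 0 < t & 0 < 1 + A * t].
  apply: (@filter_ex _ 0^'+); near=> t; split.
  - by near: t; exact: f_cvg.
  - by near: t; exact: nbhs_right_gt.
  - near: t; have : (1 + A * t) @[t --> 0^'+] --> 1 + A * 0.
      apply: cvg_within_filter.
    by apply: cvgD; [exact: cvg_cst | apply: cvgMr; exact: cvg_id].
    by rewrite mulr0 addr0 => /cvgr_gt; apply; exact: ltr01.
exists (f t) => //; rewrite f_eq; apply: mulr_gt0 => //; exact: mulr_gt0.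
Unshelve. all: by end_near.
Qed.

End GeodesicEquation.

Lemma closure_image_at_right (R : realType) (f : R -> R * R) (T : set R) t :
  {for t, continuous f} -> (\forall s \near t^'+, T s) -> closure (f @` T) (f t).
Proof.
move=> f_cont T_near U U_nbhs.
have [s [Ts Ufs]] : exists s, T s /\ U (f s).
  apply: (@filter_ex _ t^'+); near=> s; split; first by near: s.
  by near: s; exact: (cvg_within_filter _ f_cont U_nbhs).
by exists (f s); split => //; exists s.
Unshelve. all: by end_near.
Qed.

Lemma near_right_lt (R : realType) (f : R -> R) x y :
  {for x, continuous f} -> f x < y -> \forall t \near x^'+, f t < y.
Proof. by move=> f_cont; apply: cvgr_lt; exact: cvg_within_filter f_cont. Qed.

(* [axis_pt t] is the point sigma^-1 (i t) of the geodesic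
   [axis_eq = 0] = sigma^-1 (i R_+), where sigma = (a b; c d) has
   determinant 1; [axis_end] extends it by the ideal point
   [axis_end 0] = sigma^-1 0, which is oo when a = 0. *)
Section Axis.
Variables (R : realType) (a b c d : R).
Hypothesis det1 : a * d - b * c = 1.
Implicit Types (t : R) (z : R * R) (k : R * R * R).

Definition mob_den z := (c * z.1 + d) ^+ 2 + (c * z.2) ^+ 2.
Definition axis_eq := geod_eq (a * c) (a * d + b * c) (b * d).
Definition axis_den t := a ^+ 2 + c ^+ 2 * t ^+ 2.
Definition axis_pt t : R * R :=
  ((- (a * b) - c * d * t ^+ 2) / axis_den t, t / axis_den t).
Definition axis_end t : ext R :=
  if (a == 0) && (t == 0) then None else Some (axis_pt t).
Definition axis_coef_inf k := k.1.1 * d ^+ 2 - k.1.2 * c * d + k.2 * c ^+ 2.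
Definition axis_coef0 k := k.1.1 * b ^+ 2 - k.1.2 * a * b + k.2 * a ^+ 2.

Lemma axis_eq_nondeg : 4 * (a * c) * (b * d) < (a * d + b * c) ^+ 2.
Proof.
have -> : (a * d + b * c) ^+ 2 = 4 * (a * c) * (b * d) + (a * d - b * c) ^+ 2.
  by ring.
by rewrite det1 expr1n ltrDl.
Qed.

Lemma a_or_c_neq0 : (a != 0) || (c != 0).
Proof.
rewrite -negb_and; apply/negP => /andP[/eqP a0 /eqP c0].
by move: det1; rewrite a0 c0 mul0r mulr0 subrr => /eqP; rewrite eq_sym oner_eq0.
Qed.

Lemma mob_den_gt0 z : inH z -> 0 < mob_den z.
Proof.
move=> z_pos; rewrite lt_def addr_ge0 ?sqr_ge0 // andbT.
apply/eqP => /sqr_add_eq0[+ /eqP]; rewrite mulf_eq0 (gt_eqF z_pos) orbF => + /eqP c0.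
rewrite c0 mul0r add0r => d0.
by move: det1; rewrite c0 d0 !mulr0 subrr => /eqP; rewrite eq_sym oner_eq0.
Qed.

Lemma mob_fst z : mob_den z != 0 -> (mob (M2 a b c d) z).1 = axis_eq z / mob_den z.
Proof.
rewrite /mob_den => N0.
rewrite /mob /cdiv /cmul /cinv /cnorm2 /Defs.cadd /Defs.cscale /axis_eq /geod_eq /=.
by rewrite !addr0; field.
Qed.

Lemma mob_snd z : mob_den z != 0 -> (mob (M2 a b c d) z).2 = z.2 / mob_den z.
Proof.
rewrite -[z.2]mul1r -det1 /mob_den => N0.
rewrite /mob /cdiv /cmul /cinv /cnorm2 /Defs.cadd /Defs.cscale /=.
by rewrite !addr0; field.
Qed.

Lemma axis_den_gt0 t : (a != 0) || (t != 0) -> 0 < axis_den t.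
Proof.
move=> a_or_t; have := mulr_ge0 (sqr_ge0 c) (sqr_ge0 t).
have [a0|a_neq0] := eqVneq a 0; last first.
  have : 0 < a ^+ 2 by rewrite exprn_even_gt0.
  rewrite /axis_den; lra.
move: a_or_t a_or_c_neq0; rewrite a0 eqxx /= => t_neq0 c_neq0 _.
by rewrite /axis_den a0 expr0n add0r mulr_gt0 // exprn_even_gt0.
Qed.

Lemma axis_den_gt0_pos t : 0 < t -> 0 < axis_den t.
Proof. by move=> t_pos; rewrite axis_den_gt0 // (gt_eqF t_pos) orbT. Qed.

Let axis_ptE t : axis_pt t =
  ((- (a * b) - c * d * t ^+ 2) / axis_den t, (a * d - b * c) * t / axis_den t).
Proof. by rewrite det1 mul1r. Qed.

Lemma axis_eq_pt t : axis_den t != 0 -> axis_eq (axis_pt t) = 0.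
Proof.
rewrite axis_ptE /axis_den => D0; rewrite /axis_eq /geod_eq /=.
by field; rewrite ?exprMn.
Qed.

Lemma geod_eq_axis_pt k t : axis_den t != 0 ->
  geod_eq k.1.1 k.1.2 k.2 (axis_pt t) =
  (axis_coef_inf k * t ^+ 2 + axis_coef0 k) / axis_den t.
Proof.
rewrite axis_ptE /axis_den => D0; rewrite /geod_eq /axis_coef_inf /axis_coef0 /=.
by field; rewrite exprMn.
Qed.

Lemma axis_pt_halfplaneE k t : 0 < axis_den t ->
  (geod_eq k.1.1 k.1.2 k.2 (axis_pt t) <= 0) =
  (axis_coef_inf k * t ^+ 2 + axis_coef0 k <= 0).
Proof. by move=> D_pos; rewrite geod_eq_axis_pt ?gt_eqF // pmulr_lle0 // invr_gt0. Qed.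

Lemma axis_height_pt t : axis_den t != 0 -> (axis_pt t).2 / mob_den (axis_pt t) = t.
Proof.
move=> D0; transitivity (t / (a * d - b * c)); last by rewrite det1 divr1.
move: D0; rewrite axis_ptE /mob_den /axis_den /= => D0.
have -> : c * ((- (a * b) - c * d * t ^+ 2) / (a ^+ 2 + c ^+ 2 * t ^+ 2)) + d =
  a * (a * d - b * c) / (a ^+ 2 + c ^+ 2 * t ^+ 2) by field; rewrite exprMn.
by field; rewrite det1 mulr1 mul1r exprMn D0 oner_eq0.
Qed.

Lemma axis_pt_height z : mob_den z != 0 -> axis_eq z = 0 ->
  axis_pt (z.2 / mob_den z) = z.
Proof.
case: z => x y N0 G0; rewrite axis_ptE /=.
have -> : y / mob_den (x, y) = (a * d - b * c) * y / mob_den (x, y).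
  by rewrite det1 mul1r.
set dl := a * d - b * c; set N := mob_den (x, y) in N0 *.
set G := axis_eq (x, y) in G0; set u := a * x + b; set v := c * x + d.
have NE : N = v ^+ 2 + c ^+ 2 * y ^+ 2 by rewrite /N /mob_den /v /=; ring.
have GE : G = u * v + a * c * y ^+ 2 by rewrite /G /axis_eq /geod_eq /u /v /=; ring.
have N0' : v ^+ 2 + c ^+ 2 * y ^+ 2 != 0 by rewrite -NE.
have D_eq : axis_den (dl * y / N) = dl ^+ 2 / N.
  apply/eqP; rewrite -subr_eq0.
  have -> : axis_den (dl * y / N) - dl ^+ 2 / N = c * G * (a * N + dl * v) / N ^+ 2.
    by rewrite /axis_den GE NE /dl /v /u; field.
  by rewrite G0 !(mulr0, mul0r).
have dl0 : dl != 0 by rewrite /dl det1 oner_eq0.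
rewrite D_eq; congr (_, _); last by field; rewrite dl0 N0.
apply/eqP; rewrite -subr_eq0.
have -> : (- (a * b) - c * d * (dl * y / N) ^+ 2) / (dl ^+ 2 / N) - x =
    G * (- (a * N * v - c ^+ 2 * dl * y ^+ 2) + x * c * (a * N + dl * v)) / (dl ^+ 2 * N).
  by rewrite GE NE /dl /v /u; field; apply/andP.
by rewrite G0 !(mulr0, mul0r).
Qed.

Lemma continuous_axis_pt t : axis_den t != 0 -> {for t, continuous axis_pt}.
Proof.
move=> D0; have sq : (s ^+ 2) @[s --> t] --> t ^+ 2 := @exprn_continuous R 2 t.
have invD : (axis_den s)^-1 @[s --> t] --> (axis_den t)^-1.
  by apply: cvgV => //; apply: cvgD; [exact: cvg_cst | exact: cvgMr].
rewrite /axis_pt; apply: (@cvg_pair _ _ _ _ (nbhs _) (nbhs _)) => /=.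
  by apply: (cvgM _ invD); apply: cvgB; [exact: cvg_cst | exact: cvgMr].
exact: (cvgM cvg_id invD).
Qed.

Lemma mob_ext_axis_lower e t :
  mob_ext (M2 a b c d) e = Some (0, t) -> 0 <= t -> e = axis_end t.
Proof.
rewrite /axis_end; case: e => [z|] /=; last first.
  case: ifPn => // c_neq0 [/eqP]; rewrite mulf_eq0 invr_eq0 (negPf c_neq0) orbF.
  by move=> /eqP -> <-; rewrite !eqxx.
case: ifPn => // den_neq0 /Some_inj mob_z t_ge0.
have N0 : mob_den z != 0.
  apply: contra den_neq0 => /eqP /sqr_add_eq0[v0 cy0].
  by rewrite /Defs.cadd /Defs.cscale /= v0 addr0 cy0.
have := mob_fst N0; have := mob_snd N0; rewrite mob_z /= => t_eq.
move=> /esym/eqP; rewrite mulf_eq0 invr_eq0 (negPf N0) orbF => /eqP G0.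
case: ifPn => [/andP[/eqP a0 /eqP t0]|_]; last by rewrite t_eq axis_pt_height.
exfalso; move: t_eq N0 G0; rewrite t0 => /esym/eqP; rewrite mulf_eq0 invr_eq0.
case/orP=> [/eqP y0|/eqP ->]; last by rewrite eqxx.
move=> N0; have b_neq0 : b != 0.
  by apply: contra_eq_neq det1 => ->; rewrite a0 !mul0r subr0 eq_sym oner_neq0.
have -> : axis_eq z = b * (c * z.1 + d) by rewrite /axis_eq /geod_eq a0 y0; ring.
move/eqP; rewrite mulf_eq0 (negPf b_neq0) /= => /eqP v0.
by move: N0; rewrite /mob_den v0 y0 mulr0 expr0n /= addr0 eqxx.
Qed.

Lemma halfplane_axis_end (S : set (R * R)) k t :
  (forall u, S u -> geod_eq k.1.1 k.1.2 k.2 u <= 0) ->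
  closure_ext S (axis_end t) -> axis_coef_inf k * t ^+ 2 + axis_coef0 k <= 0.
Proof.
move=> S_le0; rewrite /axis_end; case: ifPn => [/andP[/eqP a0 /eqP ->]|].
  move=> /unbounded_geod_eq_lead_le0 /(_ S_le0) k1_le0.
  rewrite /axis_coef0 a0 expr0n /= !(mulr0, mul0r, addr0, subr0, add0r).
  exact: mulr_le0_ge0 k1_le0 (sqr_ge0 b).
rewrite negb_and => a_or_t /= /(closure_geod_eq_le0 S_le0).
by rewrite axis_pt_halfplaneE // axis_den_gt0.
Qed.

Lemma closure_ext_axis_end (T : set R) t :
  (\forall s \near t^'+, T s) -> closure_ext (axis_pt @` T) (axis_end t).
Proof.
move=> T_near; rewrite /axis_end; case: ifPn => [/andP[/eqP a0 /eqP t0]|]; last first.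
  rewrite negb_and => a_or_t; apply: closure_image_at_right T_near.
  by apply: continuous_axis_pt; rewrite gt_eqF // axis_den_gt0.
move=> M; rewrite t0 in T_near.
have c_neq0 : c != 0 by move: a_or_c_neq0; rewrite a0 eqxx.
have c2_pos : 0 < c ^+ 2 by rewrite exprn_even_gt0.
have M1_pos : 0 < `|M| + 1 by rewrite ltr_pwDr // normr_ge0.
have [s [Ts s_pos s_small]] :
    exists s, [/\ T s, 0 < s & s < (c ^+ 2 * (`|M| + 1))^-1].
  apply: (@filter_ex _ 0^'+); near=> s; split; first by near: s.
  - by near: s; exact: nbhs_right_gt.
  - by near: s; apply: nbhs_right_lt; rewrite invr_gt0 mulr_gt0.
exists (axis_pt s); split; first by exists s.
have -> : (axis_pt s).2 = (s * c ^+ 2)^-1.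
  by rewrite /axis_pt /axis_den a0 expr0n add0r /=; field; rewrite c_neq0 gt_eqF.
have sc2_pos : 0 < s * c ^+ 2 by rewrite mulr_gt0.
have K_pos : 0 < c ^+ 2 * (`|M| + 1) by rewrite mulr_gt0.
move: s_small; rewrite -div1r ltr_pdivlMr // => s_small.
have : `|M| + 1 < (s * c ^+ 2)^-1 by rewrite -div1r ltr_pdivlMr //; lra.
have := ler_norm M; have := normr_ge0 (axis_pt s).1.
by rewrite (gtr0_norm (_ : 0 < (s * c ^+ 2)^-1)) ?invr_gt0 //; lra.
Unshelve. all: by end_near.
Qed.
End Axis.

(* Following sigma by z |-> -1/z turns it into (c d; -a -b), which swaps the
   two ends of the axis and replaces t by 1/t. *)
Section AxisReversed.
Variables (R : realType) (a b c d : R).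
Hypothesis det1 : a * d - b * c = 1.

Lemma axis_pt_inv t : t != 0 -> axis_pt c d (- a) (- b) t^-1 = axis_pt a b c d t.
Proof.
move=> t_neq0; have : 0 < axis_den a c t by rewrite (axis_den_gt0 det1) // t_neq0 orbT.
rewrite /axis_pt /axis_den => D_pos.
by congr pair; field; rewrite exprMn (gt_eqF D_pos) t_neq0.
Qed.

Lemma mob_ext_axis_upper e t : mob_ext (M2 a b c d) e = Some (0, t) -> 0 < t ->
  e = axis_end c d (- a) (- b) t^-1.
Proof.
move=> E t_pos; rewrite (mob_ext_axis_lower det1 E (ltW t_pos)) /axis_end.
have t_neq0 : t != 0 by rewrite gt_eqF.
by rewrite invr_eq0 (negPf t_neq0) !andbF axis_pt_inv.
Qed.

Lemma mob_ext_axis_upper_inf e : mob_ext (M2 a b c d) e = None ->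
  e = axis_end c d (- a) (- b) 0.
Proof.
rewrite /axis_end eqxx andbT; case: e => [z|] /=; last by case: eqP.
case: ifPn => // /eqP; rewrite /Defs.cadd /Defs.cscale /= addr0 => -[v0 cy0] _.
have c_neq0 : c != 0.
  apply: contra_eq_neq det1 => c0; move: v0; rewrite c0 mul0r add0r => d0.
  by rewrite d0 !mulr0 subrr eq_sym oner_neq0.
move/eqP: cy0; rewrite mulf_eq0 (negPf c_neq0) => /eqP y0.
rewrite [z]surjective_pairing y0 /axis_pt /axis_den; congr (Some (_, _)).
  apply: (mulfI c_neq0); move/eqP: v0; rewrite addr_eq0 => /eqP ->.
  by rewrite expr0n /= !mulr0 subr0 addr0; field.
by rewrite mul0r.
Qed.
End AxisReversed.

Lemma axis_ends (R : realType) (a b c d : R) (z0 z1 : ext R) :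
  a * d - b * c = 1 ->
  on_pos_imag_axis (mob_ext (M2 a b c d) z0) ->
  on_pos_imag_axis (mob_ext (M2 a b c d) z1) ->
  strictly_above (mob_ext (M2 a b c d) z0) (mob_ext (M2 a b c d) z1) ->
  exists t1 s0, [/\ 0 <= t1, 0 <= s0, t1 * s0 < 1,
    z1 = axis_end a b c d t1 & z0 = axis_end c d (- a) (- b) s0].
Proof.
move=> det1 +; case E1 : (mob_ext _ z1) => [w1|]; last by case: (mob_ext _ z0).
move=> + [w11 t1_ge0]; rewrite [w1]surjective_pairing w11 in E1.
have -> := mob_ext_axis_lower det1 E1 t1_ge0.
case E0 : (mob_ext _ z0) => [w0|] /=.
  move=> [w01 _] above; have t0_pos : 0 < w0.2 by lra.
  rewrite [w0]surjective_pairing w01 in E0.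
  exists w1.2, w0.2^-1; split => //; first by rewrite invr_ge0 ltW.
    by rewrite mulrC -ltr_pdivlMl ?invr_gt0 // invrK mulr1.
  exact: mob_ext_axis_upper.
by move=> _ _; exists w1.2, 0; rewrite mulr0 (mob_ext_axis_upper_inf det1 E0).
Qed.

(* The window has ends [t1 : 1] and [1 : s0] in homogeneous coordinates, so
   [s0 = 0] stands for an upper end at infinity. *)
Lemma quad_le0_window (R : realType) (A C t1 s0 t : R) :
  0 <= t1 <= t -> 0 <= s0 -> t * s0 <= 1 ->
  A * t1 ^+ 2 + C <= 0 -> A + C * s0 ^+ 2 <= 0 -> A * t ^+ 2 + C <= 0.
Proof.
move=> /andP[t1_ge0 t1t] s0_ge0 ts0 low up.
have [A_le0|A_pos] := lerP A 0.
  have : t1 ^+ 2 <= t ^+ 2 by rewrite lerXn2r // ?nnegrE //; lra.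
  by move/(ler_wnM2l A_le0); lra.
have ts0_sq : (t * s0) ^+ 2 <= 1 by rewrite expr_le1 // mulr_ge0 //; lra.
have s0_sq : 0 < s0 ^+ 2.
  by rewrite lt_def sqr_ge0 andbT; apply: contraTneq up => ->; rewrite mulr0 addr0 -ltNge.
have : (A * t ^+ 2 + C) * s0 ^+ 2 <= 0.
  have -> : (A * t ^+ 2 + C) * s0 ^+ 2 = A * (t * s0) ^+ 2 + C * s0 ^+ 2 by ring.
  by move: ts0_sq => /(ler_wpM2l (ltW A_pos)); lra.
by rewrite pmulr_lle0.
Qed.

Section SupportingGeodesic.
Variables (R : realType) (F : set (R * R)) (A B C : R).
Hypotheses (disc : 4 * A * C < B ^+ 2) (F_lt0 : forall q, F q -> geod_eq A B C q < 0).

Let E := [set z | closureH F z /\ geod_eq A B C z = 0].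

Lemma edge_supporting_geodesic :
  connected E -> (exists z w, [/\ E z, E w & z <> w]) -> edge F E.
Proof.
move=> E_conn [z [w [Ez Ew zw]]].
have E_H u : E u -> inH u by case=> -[].
split.
- split=> //; last by exists z, w.
  exists [set u | inH u /\ geod_eq A B C u = 0]; split; first by exists A, B, C.
  by move=> u Eu; split; [exact: E_H | exact: Eu.2].
- by move=> u [u_cl u0]; split=> // /F_lt0; rewrite u0 ltxx.
move=> E' [[G' [[A' [B' [C' [disc' ->]]]] E'G']] _ _] E'_bdry EE'.
apply/seteqP; split=> [u E'u|]; last exact: EE'.
split; first exact: (E'_bdry u E'u).1.
have G'E v : E v -> geod_eq A' B' C' v = 0 by move=> /EE' /E'G' [].
apply: (geod_eq_two_points disc' zw (E_H z Ez) (E_H w Ew) Ez.2 Ew.2).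
- exact: G'E.
- exact: G'E.
- by have [] := E'G' u E'u.
Qed.

End SupportingGeodesic.

Section AxisSupport.
Variables (R : realType) (F : set (R * R)) (hs : seq (R * R * R)) (a b c d : R).
Hypotheses (F_open : open F) (F_H : F `<=` @Hset R)
  (hsE : closureH F =
         [set z | inH z /\ forall h, h \in hs -> closed_halfplane h z])
  (det1 : a * d - b * c = 1) (F_le0 : forall q, F q -> axis_eq a b c d q <= 0).

Let det_rev : c * - b - d * - a = 1.
Proof. by rewrite -det1; ring. Qed.

Lemma closureH_halfplanes z : closureH F z <->
  inH z /\ forall k, k \in hs -> geod_eq k.1.1 k.1.2 k.2 z <= 0.
Proof.
rewrite hsE; split=> -[z_pos z_le0]; split=> // k /z_le0; first by case.
by split.
Qed.

Lemma axis_eq_lt0 q : F q -> axis_eq a b c d q < 0.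
Proof.
move=> Fq; rewrite lt_def F_le0 // andbT; apply/eqP => /esym G0.
have F_nbhs : nbhs q F by apply: open_nbhs_nbhs; split.
have [w Fw] := geod_eq_gt0_near (axis_eq_nondeg det1) (F_H Fq) G0 F_nbhs.
by rewrite ltNge F_le0.
Qed.

Definition axis_params := [set t : R | 0 < t /\ forall k, k \in hs ->
  axis_coef_inf c d k * t ^+ 2 + axis_coef0 a b k <= 0].

Lemma axis_params_image :
  [set z | closureH F z /\ axis_eq a b c d z = 0] = axis_pt a b c d @` axis_params.
Proof.
apply/seteqP; split.
- move=> z [/closureH_halfplanes [z_pos z_le0] G0].
  have N0 := lt0r_neq0 (mob_den_gt0 det1 z_pos).
  have t_pos : 0 < z.2 / mob_den c d z by rewrite divr_gt0 // (mob_den_gt0 det1).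
  exists (z.2 / mob_den c d z); last exact: axis_pt_height.
  split=> // k /z_le0; rewrite -[X in geod_eq _ _ _ X](axis_pt_height det1 N0 G0).
  by rewrite axis_pt_halfplaneE // (axis_den_gt0_pos det1).
- move=> _ [t [t_pos t_le0] <-].
  have D_pos := axis_den_gt0_pos det1 t_pos.
  split; last exact: (axis_eq_pt det1 (lt0r_neq0 D_pos)).
  apply/closureH_halfplanes; split; first by rewrite /inH /= divr_gt0.
  by move=> k /t_le0; rewrite axis_pt_halfplaneE.
Qed.

Lemma axis_params_interval : is_interval axis_params.
Proof.
move=> x y [x_pos x_le0] [y_pos y_le0] t /andP[xt ty]; split=> [|k kh]; first lra.
apply: (quad_le0_window (s0 := y^-1)) (x_le0 k kh) _.
- by rewrite xt ltW.
- by rewrite invr_ge0 ltW.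
- by rewrite ler_pdivrMr // mul1r.
have -> : axis_coef_inf c d k + axis_coef0 a b k * y^-1 ^+ 2 =
    (axis_coef_inf c d k * y ^+ 2 + axis_coef0 a b k) / y ^+ 2.
  by field; rewrite gt_eqF.
by rewrite pmulr_lle0 ?invr_gt0 ?exprn_gt0 // y_le0.
Qed.

Lemma connected_axis_image : connected (axis_pt a b c d @` axis_params).
Proof.
apply: connected_continuous_connected.
  exact/connected_intervalP/axis_params_interval.
apply: continuous_in_subspaceT => t /set_mem [t_pos _].
by apply: continuous_axis_pt; rewrite gt_eqF // (axis_den_gt0_pos det1).
Qed.

Lemma axis_image_rev : axis_pt a b c d @` axis_params =
  axis_pt c d (- a) (- b) @` [set s | axis_params s^-1].
Proof.
apply/seteqP; split=> _ [t Tt <-]; exists t^-1; rewrite /= ?invrK //.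
  by rewrite (axis_pt_inv det1) // gt_eqF // Tt.1.
by rewrite -(axis_pt_inv det1) ?invrK // gt_eqF // Tt.1.
Qed.

Lemma axis_supporting_edge (I J : set (R * R)) t1 s0 :
  I `<=` closureH F -> J `<=` closureH F -> 0 <= t1 -> 0 <= s0 -> t1 * s0 < 1 ->
  closure_ext I (axis_end c d (- a) (- b) s0) -> closure_ext J (axis_end a b c d t1) ->
  exists E, [/\ edge F E, closure_ext E (axis_end c d (- a) (- b) s0)
              & closure_ext E (axis_end a b c d t1)].
Proof.
move=> I_cl J_cl t1_ge0 s0_ge0 t1s0 I_end J_end.
have halfplane S k : S `<=` closureH F -> k \in hs ->
    forall u, S u -> geod_eq k.1.1 k.1.2 k.2 u <= 0.
  by move=> S_cl kh u /S_cl /closureH_halfplanes [_]; apply.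
have window t : t1 < t -> t * s0 < 1 -> axis_params t.
  move=> t1t ts0; split=> [|k kh]; first lra.
  apply: (quad_le0_window (t1 := t1) (s0 := s0)) => //; first by rewrite t1_ge0 ltW.
  - exact: ltW.
  - exact: (halfplane_axis_end det1 (halfplane J k J_cl kh) J_end).
  have := halfplane_axis_end det_rev (halfplane I k I_cl kh) I_end.
  by rewrite /axis_coef_inf /axis_coef0; lra.
have near_t1 : \forall t \near t1^'+, t1 < t /\ t * s0 < 1.
  near=> t; split; near: t; first exact: nbhs_right_gt.
  by apply: near_right_lt => //; apply: cvgMl; exact: cvg_id.
exists (axis_pt a b c d @` axis_params); split.
- rewrite -axis_params_image.
  apply: (edge_supporting_geodesic (axis_eq_nondeg det1) axis_eq_lt0).
    by rewrite axis_params_image; exact: connected_axis_image.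
  have [t [t1t ts0]] := filter_ex near_t1.
  have T_mid : axis_params ((t1 + t) / 2).
    apply: window; first lra.
    by apply: le_lt_trans ts0; rewrite ler_wpM2r //; lra.
  rewrite axis_params_image.
  exists (axis_pt a b c d ((t1 + t) / 2)), (axis_pt a b c d t).
  split; [by exists ((t1 + t) / 2) | by exists t => //; exact: window |].
  move=> /(congr1 (fun z => z.2 / mob_den c d z)).
  have D_pos u : t1 < u -> 0 < axis_den a c u.
    by move=> t1u; apply: (axis_den_gt0_pos det1); lra.
  by rewrite !axis_height_pt ?gt_eqF ?D_pos //; lra.
- rewrite axis_image_rev; apply: (closure_ext_axis_end det_rev); near=> s.
  have s_pos : 0 < s by apply: le_lt_trans s0_ge0 _; near: s; exact: nbhs_right_gt.
  apply: window; last first.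
    by rewrite mulrC ltr_pdivrMr // mul1r; near: s; exact: nbhs_right_gt.
  rewrite -div1r ltr_pdivlMr //; near: s.
  by apply: near_right_lt => //; apply: cvgMr; exact: cvg_id.
- by apply: (closure_ext_axis_end det1); apply: filterS near_t1 => t [/window].
Unshelve. all: by end_near.
Qed.

End AxisSupport.

Lemma ge0_le_integral_subset (R : realType) (dT : measure_display)
    (T : measurableType dT) (mu : {measure set T -> \bar R})
    (D1 D2 : set T) (f g : T -> \bar R) :
  (forall x, D1 x -> 0 <= f x)%E -> (forall x, D2 x -> 0 <= g x)%E ->
  D1 `<=` D2 -> (forall x, D1 x -> f x <= g x)%E ->
  (\int[mu]_(x in D1) f x <= \int[mu]_(x in D2) g x)%E.
Proof.
move=> f_ge0 g_ge0 D12 fg; rewrite !ge0_integralE //.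
apply: le_ereal_sup => _ [h hf <-]; exists h => // x.
apply: (le_trans (hf x)); rewrite /patch.
case: ifPn => [/[1!inE] D1x|_]; first by rewrite ifT ?inE ?fg //; exact: D12.
by case: ifPn => [/[1!inE] /g_ge0|].
Qed.

Section HyperbolicArea.
Variable R : realType.

Lemma mu2_box (x1 x2 y1 y2 : R) : x1 < x2 -> y1 < y2 ->
  @mu2 R (`]x1, x2[%classic `*` `]y1, y2[%classic) = ((x2 - x1) * (y2 - y1))%:E.
Proof.
move=> x12 y12; rewrite /mu2 product_measure1E; try exact: measurable_itv.
transitivity (lebesgue_measure (`]x1, x2[%classic : set R) *
              lebesgue_measure (`]y1, y2[%classic : set R))%E => //.
by rewrite !lebesgue_measure_itv /= !lte_fin x12 y12 -!EFinB -EFinM.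
Qed.

Lemma harea_gt0 (A U : set (R * R)) q :
  open U -> U q -> inH q -> U `<=` A -> (0 < harea A)%E.
Proof.
rewrite /inH => U_open Uq q_pos UA.
have /nbhs_ballP[e /= e_pos qeU] : nbhs q U by apply: open_nbhs_nbhs.
pose r := Num.min e (q.2 / 2); have r_pos : 0 < r by rewrite lt_min e_pos /=; lra.
have r_e : r <= e by rewrite ge_min lexx.
have r_q : r <= q.2 / 2 by rewrite ge_min lexx orbT.
pose B := `](q.1 - r), (q.1 + r)[%classic `*` `](q.2 - r), (q.2 + r)[%classic.
pose h := (q.2 + r) ^- 2; have h_pos : 0 < h by rewrite invr_gt0 exprn_gt0 //; lra.
have box_area : (\int[@mu2 R]_(z in B) h%:E = ((2 * r) * (2 * r) * h)%:E)%E.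
  rewrite integral_cst; last by apply: measurableX; exact: measurable_itv.
  transitivity (h%:E * ((q.1 + r - (q.1 - r)) * (q.2 + r - (q.2 - r)))%:E)%E.
    by congr (_ * _)%E; apply: mu2_box; lra.
  by rewrite -EFinM; congr (_%:E); ring.
apply: (@lt_le_trans _ _ (\int[@mu2 R]_(z in B) h%:E)%E).
  by rewrite box_area lte_fin !mulr_gt0 //; lra.
apply: ge0_le_integral_subset.
- by move=> z _; rewrite lee_fin ltW.
- by move=> z _; rewrite lee_fin invr_ge0 sqr_ge0.
- move=> [x y] [/= /[!in_itv] /= /andP[x1 x2] /andP[y1 y2]].
  by apply/UA/qeU; split; rewrite /ball /= ltr_norml; apply/andP; split; lra.
move=> [x y] [_ /= /[!in_itv] /= /andP[y1 y2]].
rewrite lee_fin lef_pV2 ?posrE ?exprn_gt0 //; try lra.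
by rewrite ler_pXn2r ?nnegrE //; lra.
Qed.

End HyperbolicArea.

Lemma Btilde_axis_eq_ge0 (R : realType) (a b c d : R) (x0 x1 : ext R) z :
  a * d - b * c = 1 ->
  mob_ext (M2 a b c d) x0 = None -> mob_ext (M2 a b c d) x1 = Some (0, 0) ->
  inH z -> 0 <= axis_eq a b c d z -> Btilde x0 x1 z.
Proof.
move=> det1 x0_inf x1_0 z_pos G_ge0; split=> //; exists (M2 a b c d); split=> //.
have N_pos := mob_den_gt0 det1 z_pos.
by rewrite mob_fst ?gt_eqF // divr_ge0 // ltW.
Qed.

Theorem lemma5p3 (R : realType) (Gamma : set (mat2 R)) (F I J : set (R * R)) :
  discrete_subgroup Gamma ->
  fundamental_polygon Gamma F ->
  (harea F < +oo)%E ->                      (* finite covolume *)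
  boundary_subsegment F I -> boundary_subsegment F J ->
  I `&` J = set0 ->
  (forall (e e' : ext R) (E : set (R * R)),
      endpoint I e -> endpoint J e' -> edge F E ->
      closure_ext E e -> closure_ext E e' -> False) ->
  forall z0 z1 x0 x1 : ext R,
    endpoint I z0 -> endpoint J z1 ->
    (exists2 p, F p & pos_arc F p z1 z0 `&` (I `|` J) = set0) ->
    geod_ends z0 z1 x0 x1 ->
    (0 < harea (Btilde x0 x1 `&` F))%E.
Proof.
move=> _ [[F_H F_open] _ [hs [_ hsE]] _ _] _ [I_bdry _ _ _] [J_bdry _ _ _] _
  no_common_edge z0 z1 x0 x1 I_z0 J_z1 _
  [_ _ [[a b c d] [det1 [x0_inf x1_0] on0 on1 above]]].
rewrite /det /= in det1.
have [[q Fq q_pos]|F_le0] := pselect (exists2 q, F q & 0 < axis_eq a b c d q).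
  apply: (harea_gt0 (U := F `&` [set z | 0 < axis_eq a b c d z]) _ (conj Fq q_pos)).
  - apply: openI => //; apply: open_comp (@open_gt _ 0) => z _.
    exact: continuous_geod_eq.
  - exact: F_H.
  - move=> z [Fz /= z_pos]; split=> //.
    by apply: (Btilde_axis_eq_ge0 det1 x0_inf x1_0); [exact: F_H | exact: ltW].
have {}F_le0 q : F q -> axis_eq a b c d q <= 0.
  by move=> Fq; rewrite leNgt; apply/negP => q_pos; apply: F_le0; exists q.
have [t1 [s0 [t1_ge0 s0_ge0 t1s0 z1E z0E]]] := axis_ends det1 on0 on1 above.
subst z0 z1.
have bdry_cl S : S `<=` bdry F -> S `<=` closureH F by move=> S_bdry z /S_bdry [].
have [E [E_edge E_z0 E_z1]] := axis_supporting_edge F_open F_H hsE det1 F_le0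
  (bdry_cl _ I_bdry) (bdry_cl _ J_bdry) t1_ge0 s0_ge0 t1s0
  I_z0.1 J_z1.1.
by case: (no_common_edge _ _ _ I_z0 J_z1 E_edge E_z0 E_z1).
Qed.
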